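(* In the top-$k$ allocation setting, the audit policy \textsc{uniform-k} is $\varepsilon^*$-DSIC where $\varepsilon^*$ is the smallest $\varepsilon$ for which some audit policy with budget $B$ is $\varepsilon$-DSIC; i.e. \textsc{uniform-k} is an optimal audit policy under the dominant-strategy incentive compatibility criterion.
   Context: Model: there are $n$ agents. Agent $i$ has a true type $\mathbf{a}_i=(\mathbf{x}_i,\mathbf{z}_i)$, where $\mathbf{x}_i$ is a known (verifiable) partial type and $\mathbf{z}_i\in I^s$ is a self-reported partial type. Agent $i$ reports $\mathbf{a}_i'=(\mathbf{x}_i,\mathbf{z}_i')$. In the top-$k$ allocation setting, resources go to the $k$ agents with the highest reported scores under a score function $f$; $\alpha_i(f,\mathcal{A}')\in\{0,1\}$ indicates allocation to agent $i$ given reports $\mathcal{A}'$. An audit policy maps each set of reports $\mathcal{A}'$ to probabilities $\phi_i(\mathcal{A}')\in[0,1]$ with $\sum_i\phi_i(\mathcal{A}')\le B$. An audited liar loses the resource and pays penalty $c\ge0$: a lying agent's utility is $\alpha_i(f,\mathcal{A}')(1-\phi_i(\mathcal{A}'))-c\,\phi_i(\mathcal{A}')$, a truthful agent's utility is $\alpha_i(f,\mathcal{A})$. A policy $\phi$ is $\varepsilon$-DSIC if for every agent $i$, every true type $\mathbf{a}_i$, every report $\mathbf{a}_i'$ with the same known part $\mathbf{x}_i$, and every profile of other agents' reports $\mathcal{A}'_{-i}$, the expected utility (over the randomness of auditing) of reporting truthfully is at least the expected utility of reporting $\mathbf{a}_i'$ minus $\varepsilon$. The policy \textsc{uniform-k}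 audits each agent among the $k$ highest-scoring reports in $\mathcal{A}'$ with probability $\min(1,B/k)$ and audits no other agent. *)

From mathcomp Require Import all_boot all_order all_algebra.
Set Implicit Arguments. Unset Strict Implicit. Unset Printing Implicit Defensive.
Import Order.TTheory GRing.Theory Num.Theory.
Local Open Scope ring_scope.

(* An agent type (x, z): x : X is the known (verifiable) partial type,
   z : 'I_s -> R is the self-reported partial type (a point of R^s). *)
Definition agent_type (R X : Type) (s : nat) := (X * ('I_s -> R))%type.

Definition profile (R X : Type) (n s : nat) := 'I_n -> agent_type R X s.

Definition in_Is (R : Type) (s : nat) (I : R -> Prop) (z : 'I_s -> R) : Prop :=
  forall t : 'I_s, I (z t).

Definition valid_profile (R X : Type) (n s : nat) (I : R -> Prop)
  (A : profile R X n s) : Prop := forall j : 'I_n, in_Is I (A j).2.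

Definition upd (R X : Type) (n s : nat) (A : profile R X n s) (i : 'I_n)
  (a : agent_type R X s) : profile R X n s :=
  fun j => if j == i then a else A j.

Definition score (R : realFieldType) (X : Type) (s : nat)
  (f : X -> ('I_s -> R) -> R) (a : agent_type R X s) : R := f a.1 a.2.

Definition ranked_before (R : realFieldType) (X : Type) (n s : nat)
  (f : X -> ('I_s -> R) -> R) (A : profile R X n s) (i j : 'I_n) : bool :=
  (score f (A i) < score f (A j)) || ((score f (A j) == score f (A i)) && (j < i)%N).

Definition alloc (R : realFieldType) (X : Type) (n s : nat)
  (f : X -> ('I_s -> R) -> R) (k : nat) (A : profile R X n s) (i : 'I_n) : R :=
  if (#|[pred j : 'I_n | ranked_before f A i j]| < k)%N then 1 else 0.

Definition is_audit_policy (R : realFieldType) (X : Type) (n s : nat)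
  (I : R -> Prop) (B : R) (phi : profile R X n s -> 'I_n -> R) : Prop :=
  forall A : profile R X n s, valid_profile I A ->
    (forall i, 0 <= phi A i <= 1) /\ \sum_(i < n) phi A i <= B.

(* eps-DSIC: for every agent i, true type a, report a' with the same known
   part, and reports A' of the others (entry i of A' is overwritten),
   truthful utility >= lying utility - eps. *)
Definition eps_DSIC (R : realFieldType) (X : Type) (n s : nat)
  (I : R -> Prop) (f : X -> ('I_s -> R) -> R) (k : nat) (c : R)
  (phi : profile R X n s -> 'I_n -> R) (eps : R) : Prop :=
  forall (i : 'I_n) (a a' : agent_type R X s) (A' : profile R X n s),
    in_Is I a.2 -> in_Is I a'.2 -> a'.1 = a.1 -> valid_profile I A' ->
    alloc f k (upd A' i a') i * (1 - phi (upd A' i a') i)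
      - c * phi (upd A' i a') i - eps
    <= alloc f k (upd A' i a) i.

Definition uniform_k (R : realFieldType) (X : Type) (n s : nat)
  (f : X -> ('I_s -> R) -> R) (k : nat) (B : R)
  (A : profile R X n s) (i : 'I_n) : R :=
  if alloc f k A i == 1 then Num.min 1 (B / k%:R) else 0.

From mathcomp Require Import all_boot all_order all_algebra.
From mathcomp Require Import lra.
From Stdlib Require Import FunctionalExtensionality.
Import Order.TTheory GRing.Theory Num.Theory.
Set Implicit Arguments. Unset Strict Implicit.
Local Open Scope ring_scope.

(* The ranking "j is ranked before i" is a strict total order on agents, so
   the number [rank A i] of agents ranked before i is injective in i; hence
   at most k agents win, and uniform-k, auditing each winner with probability
   p = min(1, B/k), spends at most k * p <= B.

   For optimality, take an eps-DSIC audit policy phi.  Uniform-k can only be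
   violated by a losing truthful agent whose lie wins; the lie must then
   strictly raise its score (the rank is monotone in the own score) and
   k <= n - 1.  In the unanimous profile where everybody reports the lie a',
   the first k agents win and each would lose by reporting its true type a,
   so DSIC of phi forces 1 - eps <= (1 + c) phi_j for each of them; summing
   against the budget gives k (1 - eps) <= (1 + c) B.  This inequality is
   exactly what makes the lie unprofitable up to eps under uniform-k. *)

Lemma card_label_below {T : finType} {g : T -> nat} :
  injective g -> forall k : nat, (#|[pred x | (g x < k)%N]| <= k)%N.
Proof.
move=> g_inj k; rewrite cardE -(size_map g) -[k in (_ <= k)%N](size_iota 0 k).
apply: uniq_leq_size; first by rewrite (map_inj_uniq g_inj) enum_uniq.
by move=> y /mapP[x]; rewrite mem_enum inE => hx ->; rewrite mem_iota.
Qed.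

Section UniformProbability.
Variable R : realFieldType.

Definition uniform_prob (k : nat) (B : R) : R := Num.min 1 (B / k%:R).

Lemma uniform_prob_range k B : 0 <= B -> 0 <= uniform_prob k B <= 1.
Proof.
move=> B_ge0; have BK_ge0 : 0 <= B / k%:R by rewrite divr_ge0.
rewrite /uniform_prob; case: (lerP 1 (B / k%:R)) => [_|/ltW le_Bk1].
  by rewrite ler01 lexx.
by rewrite BK_ge0 le_Bk1.
Qed.

Lemma uniform_prob_spend k B : 0 <= B -> uniform_prob k B * k%:R <= B.
Proof.
move=> B_ge0; case: k => [|k]; first by rewrite mulr0.
rewrite -ler_pdivlMr ?ltr0n // /uniform_prob.
by case: (lerP 1 (B / k.+1%:R)) => // /ltW.
Qed.

Lemma uniform_prob_deters k B c eps :
  (0 < k)%N -> 0 <= c -> 0 <= eps -> (1 - eps) *+ k <= (1 + c) * B ->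
  1 - uniform_prob k B - c * uniform_prob k B - eps <= 0.
Proof.
move=> k_gt0 c_ge0 eps_ge0 budget; rewrite /uniform_prob.
case: (lerP 1 (B / k%:R)) => _; first by lra.
have : 1 - eps <= (1 + c) * B / k%:R by rewrite ler_pdivlMr ?ltr0n // mulr_natr.
by rewrite mulrDl mul1r mulrDl -mulrA; lra.
Qed.

End UniformProbability.

Section Ranking.
Variables (R : realFieldType) (X : Type) (n s : nat) (f : X -> ('I_s -> R) -> R).
Implicit Types (A P : profile R X n s) (i j l : 'I_n).

Lemma ranked_before_irrefl A i : ranked_before f A i i = false.
Proof. by rewrite /ranked_before ltxx ltnn andbF. Qed.

Lemma ranked_before_trans A i j l :
  ranked_before f A i j -> ranked_before f A j l -> ranked_before f A i l.
Proof.
rewrite /ranked_before.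
set a := score f (A i); set b := score f (A j); set d := score f (A l).
case/orP=> [ab|/andP[/eqP ba ji]]; case/orP=> [bd|/andP[/eqP db lj]].
- by rewrite (lt_trans ab bd).
- by rewrite db ab.
- by rewrite -ba bd.
- by rewrite db ba eqxx (ltn_trans lj ji) orbT.
Qed.

Lemma ranked_before_total A i j :
  i != j -> ranked_before f A i j || ranked_before f A j i.
Proof.
rewrite -(inj_eq val_inj) neq_ltn /ranked_before => nij.
by case: (ltgtP (score f (A i)) (score f (A j))); rewrite //= orbC.
Qed.

Definition rank A i : nat := #|[pred j : 'I_n | ranked_before f A i j]|.

Lemma alloc_rank k A i : alloc f k A i = if (rank A i < k)%N then 1 else 0.
Proof. by []. Qed.

Lemma rank_lt A i j : ranked_before f A i j -> (rank A j < rank A i)%N.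
Proof.
move=> ij; apply: proper_card; apply/properP; split.
  by apply/subsetP=> l; rewrite !inE; exact: ranked_before_trans.
by exists j; rewrite !inE ?ranked_before_irrefl.
Qed.

Lemma rank_inj A : injective (rank A).
Proof.
move=> i j eq_ij; apply/eqP/negPn/negP => /(ranked_before_total A).
by case/orP=> /rank_lt; rewrite eq_ij ltnn.
Qed.

Lemma card_winners k A : (#|[pred i | (rank A i < k)%N]| <= k)%N.
Proof. exact: card_label_below (@rank_inj A) k. Qed.

Lemma rank_le_pred A i : (rank A i <= n.-1)%N.
Proof.
rewrite -[in X in (_ <= X)%N](card_ord n) -(cardC1 i).
apply: subset_leq_card; apply/subsetP => l; rewrite !inE.
by apply: contraTneq => ->; rewrite ranked_before_irrefl.
Qed.

Lemma rank_worst P j :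
  (forall l, l != j -> score f (P j) < score f (P l)) -> rank P j = n.-1.
Proof.
move=> worst; apply/eqP; rewrite eqn_leq rank_le_pred /=.
rewrite -[in X in (X <= _)%N](card_ord n) -(cardC1 j).
apply: subset_leq_card; apply/subsetP => l; rewrite !inE => nlj.
by rewrite /ranked_before worst.
Qed.

(* When all scores tie, only agents of smaller index are ranked before j. *)
Lemma rank_tied P j (x : R) : (forall l, score f (P l) = x) -> (rank P j <= j)%N.
Proof.
move=> tied; apply: leq_trans (card_label_below (@val_inj _ _ (ordinal n)) j).
apply: subset_leq_card; apply/subsetP => l.
by rewrite !inE /ranked_before !tied ltxx eqxx.
Qed.

Lemma rank_upd_mono A i (a a' : agent_type R X s) :
  score f a' <= score f a -> (rank (upd A i a) i <= rank (upd A i a') i)%N.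
Proof.
move=> le_a'a; apply: subset_leq_card; apply/subsetP => l; rewrite !inE.
have [->|nli] := eqVneq l i; first by rewrite ranked_before_irrefl.
rewrite /ranked_before /upd (negbTE nli) eqxx.
case/orP=> [lt_al|/andP[/eqP eq_la li]]; first by rewrite (le_lt_trans le_a'a lt_al).
move: le_a'a; rewrite le_eqVlt eq_la => /orP[/eqP->|->] //.
by rewrite eqxx li orbT.
Qed.

Lemma uniform_k_rank k B A i :
  uniform_k f k B A i = if (rank A i < k)%N then uniform_prob k B else 0.
Proof.
rewrite /uniform_k alloc_rank; case: (rank A i < k)%N; first by rewrite eqxx.
by rewrite eq_sym oner_eq0.
Qed.

Lemma uniform_k_audit_policy (I : R -> Prop) k B :
  0 <= B -> is_audit_policy I B (uniform_k (n:=n) f k B).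
Proof.
move=> B_ge0 A _; have /andP[p0 p1] := uniform_prob_range k B_ge0.
split=> [i|]; first by rewrite uniform_k_rank; case: ifP; rewrite ?lexx ?ler01 ?p0.
under eq_bigr do rewrite uniform_k_rank.
rewrite -big_mkcond sumr_const -mulr_natr.
apply: le_trans (uniform_prob_spend k B_ge0).
by rewrite ler_wpM2l // ler_nat card_winners.
Qed.

(* Lower bound on the budget of any eps-DSIC policy: if some lie a' strictly
   beats the true type a and top-k does not allocate to everybody, then
   k (1 - eps) <= (1 + c) B, witnessed by the unanimous profile of a'. *)
Lemma dsic_budget_bound (I : R -> Prop) (k : nat) (B c eps : R)
    (phi : profile R X n s -> 'I_n -> R) (a a' : agent_type R X s) :
  0 <= c -> is_audit_policy I B phi -> eps_DSIC I f k c phi eps ->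
  in_Is I a.2 -> in_Is I a'.2 -> a'.1 = a.1 ->
  score f a < score f a' -> (k <= n.-1)%N ->
  (1 - eps) *+ k <= (1 + c) * B.
Proof.
move=> c_ge0 phi_policy phi_dsic Ia Ia' same_x lt_aa' kn.
pose Q : profile R X n s := fun=> a'.
have validQ : valid_profile I Q by [].
have [phi01 phiB] := phi_policy Q validQ.
have first_k_bound j : (j < k)%N -> 1 - eps <= (1 + c) * phi Q j.
  move=> jk; have := phi_dsic j a a' Q Ia Ia' same_x validQ.
  have -> : upd Q j a' = Q by apply: functional_extensionality => l; rewrite /upd if_same.
  have lose : rank (upd Q j a) j = n.-1.
    by apply: rank_worst => l nlj; rewrite /upd eqxx (negbTE nlj).
  have win : (rank Q j < k)%N.
    exact: leq_ltn_trans (@rank_tied Q j (score f a') (fun=> erefl)) jk.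
  by rewrite !alloc_rank lose win ltnNge kn /= mulrDl mul1r; lra.
have kn' : (k <= n)%N := leq_trans kn (leq_pred n).
have -> : (1 - eps) *+ k = \sum_(j < k) (1 - eps) by rewrite sumr_const card_ord.
apply: le_trans (_ : \sum_(j < k) (1 + c) * phi Q (widen_ord kn' j) <= _).
  by apply: ler_sum => j _; apply: first_k_bound; rewrite /= ltn_ord.
rewrite -mulr_sumr ler_wpM2l ?addr_ge0 ?ler01 //.
rewrite -(big_ord_narrow (F := phi Q) kn'); apply: le_trans phiB.
rewrite [X in _ <= X](bigID (fun j : 'I_n => (j < k)%N)) /= lerDl.
by apply: sumr_ge0 => j _; case/andP: (phi01 j).
Qed.
End Ranking.

Theorem mainTheorem6 (R : realFieldType) (X : Type) (n s k : nat)
  (I : R -> Prop) (f : X -> ('I_s -> R) -> R) (B c : R) :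
  0 <= B -> 0 <= c ->
  is_audit_policy I B (uniform_k (n:=n) f k B) /\
  (forall (phi : profile R X n s -> 'I_n -> R) (eps : R),
     0 <= eps -> is_audit_policy I B phi -> eps_DSIC I f k c phi eps ->
     eps_DSIC I f k c (uniform_k (n:=n) f k B) eps).
Proof.
move=> B_ge0 c_ge0; split; first exact: uniform_k_audit_policy.
move=> phi eps eps_ge0 phi_policy phi_dsic i a a' A' Ia Ia' same_x _.
set lie := upd A' i a'; set truth := upd A' i a.
have /andP[p0 p1] := uniform_prob_range k B_ge0.
have cp0 : 0 <= c * uniform_prob k B by rewrite mulr_ge0.
rewrite !alloc_rank uniform_k_rank.
(* A truthful winner gets 1, and a losing lie gets at most 0. *)
have [_|truth_loses] := ltnP (rank f truth i) k; first by case: ifP; lra.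
case: ifPn => [lie_wins|_]; last by lra.
(* Otherwise the lie strictly raises the score and not everybody wins. *)
have lt_aa' : score f a < score f a'.
  rewrite ltNge; apply/negP => /(rank_upd_mono A' i) le_rank.
  by move: lie_wins; rewrite ltnNge (leq_trans truth_loses le_rank).
have kn : (k <= n.-1)%N := leq_trans truth_loses (rank_le_pred f truth i).
have k_gt0 : (0 < k)%N := leq_ltn_trans (leq0n _) lie_wins.
have := uniform_prob_deters k_gt0 c_ge0 eps_ge0
  (dsic_budget_bound c_ge0 phi_policy phi_dsic Ia Ia' same_x lt_aa' kn).
by rewrite mul1r; lra.
Qed.
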